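(* Let $\mathcal{T}\in\mathbb{K}^{R\times R\times K}$ be slice mix invertible, of multilinear rank $(R,R,K)$ and border $\mathbb{K}$-rank $R$. If $\mathscr{L}$ is a JGE value of $\mathcal{T}$ with $\mathrm{am}(\mathscr{L})=m\geq1$, then $\mathrm{gm}(\mathscr{L})\geq 1$.
   Context: $\mathbb{K}$ denotes $\mathbb{R}$ or $\mathbb{C}$. Multilinear rank $(R_1,R_2,R_3)$: $R_i$ is the dimension of the span of mode-$i$ fibers. Border $\mathbb{K}$-rank: least $R$ such that the tensor is a limit of tensors of $\mathbb{K}$-rank at most $R$. For $\mathcal{T}$ with slices $\mathbf{T}_k$: slice mix invertible means some linear combination of the $\mathbf{T}_k$ is invertible; $p_{\mathcal{T}}(\boldsymbol{\gamma})=\det(\sum_k\gamma_k\mathbf{T}_k)$. For nonzero $\boldsymbol{\lambda}\in\mathbb{K}^K$, $\mathrm{am}(\mathrm{span}(\boldsymbol{\lambda}))$ is the largest $m$ with $(\sum_k\lambda_k\gamma_k)^m\mid p_{\mathcal{T}}$; a nonzero $\mathbf{x}$ is a JGE vector paired with $\mathrm{span}(\boldsymbol{\lambda})$ if $\mathbf{T}_\ell\mathbf{x}=\lambda_\ell\mathbf{y}$ for all $\ell$ for some nonzero $\mathbf{y}$; $\mathrm{gm}(\mathrm{span}(\boldsymbol{\lambda}))$ is the dimension of the span of such $\mathbf{x}$. A JGE value here means a one-dimensional subspace $\mathrm{span}(\boldsymbol{\lambda})\subset\mathbb{K}^K$ with positive algebraic multiplicity. *)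

From HB Require Import structures.
From mathcomp Require Import all_boot all_order all_algebra.
From mathcomp Require Import mpoly.
From mathcomp Require Import complex.
From mathcomp Require Import reals.

Set Implicit Arguments.
Unset Strict Implicit.
Unset Printing Implicit Defensive.

Import Order.TTheory GRing.Theory Num.Theory.
Local Open Scope ring_scope.

(* A tensor in F^{n x n x K}, given by its frontal slices T_k (k < K);
   the entry T_{i j k} is [T k i j]. *)
Definition tensor (F : Type) (n K : nat) := 'I_K -> 'M[F]_n.

Section Defs.
Variable F : numFieldType.
Variables n K : nat.
Implicit Types (T S : tensor F n K).

Definition rank_le (r : nat) T : Prop :=
  exists (a b : 'I_r -> 'I_n -> F) (c : 'I_r -> 'I_K -> F),
    forall (i j : 'I_n) (k : 'I_K), T k i j = \sum_(l < r) a l i * b l j * c l k.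

(* T is a limit (entrywise, equivalently in any norm on the finite dimensional
   space F^{n x n x K}) of tensors of F-rank at most r *)
Definition border_rank_le (r : nat) T : Prop :=
  forall e : F, 0 < e -> exists S, rank_le r S /\
    forall (i j : 'I_n) (k : 'I_K), `|T k i j - S k i j| < e.

Definition border_rank_eq (r : nat) T : Prop :=
  border_rank_le r T /\ forall r', (r' < r)%N -> ~ border_rank_le r' T.

Definition fiber1 T (j : 'I_n) (k : 'I_K) : 'rV[F]_n := \row_i T k i j.
Definition fiber2 T (i : 'I_n) (k : 'I_K) : 'rV[F]_n := \row_j T k i j.
Definition fiber3 T (i j : 'I_n) : 'rV[F]_K := \row_k T k i j.

Definition mlrank T : nat * nat * nat :=
  (\dim <<[seq fiber1 T j k | j <- enum 'I_n, k <- enum 'I_K]>>%VS,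
   \dim <<[seq fiber2 T i k | i <- enum 'I_n, k <- enum 'I_K]>>%VS,
   \dim <<[seq fiber3 T i j | i <- enum 'I_n, j <- enum 'I_n]>>%VS).

Definition slice_mix_invertible T : Prop :=
  exists g : 'I_K -> F, (\sum_(k < K) g k *: T k) \in unitmx.

Definition pT T : {mpoly F[K]} :=
  \det (\matrix_(i, j) \sum_(k < K) (T k i j)%:MP * 'X_k).

Definition linform (lam : 'rV[F]_K) : {mpoly F[K]} :=
  \sum_(k < K) (lam 0 k)%:MP * 'X_k.

Definition mdvd (p q : {mpoly F[K]}) : Prop := exists r, q = p * r.

Definition am_eq T (lam : 'rV[F]_K) (m : nat) : Prop :=
  mdvd (linform lam ^+ m) (pT T) /\ ~ mdvd (linform lam ^+ m.+1) (pT T).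

Definition JGE_vector T (lam : 'rV[F]_K) (x : 'cV[F]_n) : Prop :=
  x != 0 /\ exists y : 'cV[F]_n, y != 0 /\
    forall l : 'I_K, T l *m x = lam 0 l *: y.

(* gm(span lam) >= d : the span of the JGE vectors has dimension >= d, i.e.
   there are d linearly independent JGE vectors (the columns of X). *)
Definition gm_ge T (lam : 'rV[F]_K) (d : nat) : Prop :=
  exists X : 'M[F]_(n, d), row_free X^T /\
    forall c : 'I_d, JGE_vector T lam (col c X).

Definition lemma3p4_stmt : Prop :=
  forall T : tensor F n K,
    slice_mix_invertible T ->
    mlrank T = (n, n, K) ->
    border_rank_eq n T ->
    forall (lam : 'rV[F]_K), lam != 0 ->
    forall m : nat, (1 <= m)%N -> am_eq T lam m ->
    gm_ge T lam 1.

End Defs.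

(* Let Tg be an invertible slice mix. A tensor of rank at most n has slices
   U D_k B with D_k diagonal, so T_k Tg^-1 T_l is symmetric in k and l.
   Multiplied by det Tg this becomes a polynomial identity in the entries,
   which passes to border rank at most n by continuity; hence the matrices
   P_k = Tg^-1 T_k commute.  As am >= 1, every combination of the P_k with
   coefficients orthogonal to lambda is singular, and these combinations are
   spanned by the commuting matrices lambda_k0 P_j - lambda_j P_k0.
   Over an algebraically closed field of characteristic 0, commuting matrices
   N_j with every sum_j s^j N_j (s in N) singular have a common kernel vector:
   a joint eigenvector in the kernel of sum_j s^j N_j has an eigenvalue tuple c
   with sum_j c_j s^j = 0, there are finitely many tuples, and infinitely many
   s force c = 0.  The real case follows by complexification, since the rank
   of the stacked matrix does not change.  A common kernel vector x of the
   differences satisfies P_j x = lambda_j y, and T_j x = lambda_j (Tg y). *)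

From HB Require Import structures.
From mathcomp Require Import all_boot all_order all_algebra.
From mathcomp Require Import mpoly complex reals.
Set Implicit Arguments.
Unset Strict Implicit.
Unset Printing Implicit Defensive.
Import Order.TTheory GRing.Theory Num.Theory.
Local Open Scope ring_scope.

Lemma comm_mxZ (R : comPzRingType) n (f g : 'M[R]_n) a :
  comm_mx f g -> comm_mx f (a *: g).
Proof. by move=> fg; rewrite /comm_mx -scalemxAr -scalemxAl fg. Qed.

Lemma comm_mx_invmx (R : comUnitRingType) n (A B : 'M[R]_n) :
  A \in unitmx -> comm_mx A B -> comm_mx (invmx A) B.
Proof.
move=> Au AB; rewrite /comm_mx.
have -> : invmx A *m B = invmx A *m (B *m A) *m invmx A.
  by rewrite mulmxA (mulmxK Au).
by rewrite -AB (mulKmx Au).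
Qed.

Lemma adj_unitmx (R : comUnitRingType) n (A : 'M[R]_n) :
  A \in unitmx -> \adj A = \det A *: invmx A.
Proof. by move=> Au; rewrite /invmx Au scalerA divrr ?scale1r // -unitmxE. Qed.

Lemma diag_mxZ (R : pzRingType) n a (d : 'rV[R]_n) :
  diag_mx (a *: d) = a *: diag_mx d.
Proof. by apply/matrixP => i j; rewrite !mxE mulrnAr. Qed.

Lemma map_mxrow (aR rR : Type) (f : aR -> rR) m p (q_ : 'I_p -> nat)
    (B : forall j, 'M[aR]_(m, q_ j)) :
  map_mx f (\mxrow_j B j) = \mxrow_j map_mx f (B j).
Proof. by apply/matrixP => i k; rewrite !mxE. Qed.

Section LocallyLipschitz.
Variables (F : numFieldType) (n K : nat) (T : tensor F n K).

Definition close_to (d : F) (S : tensor F n K) :=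
  forall i j k, `|T k i j - S k i j| <= d.

Definition locally_lipschitz (f : tensor F n K -> F) :=
  exists2 C, 0 <= C &
    forall d S, 0 < d -> d <= 1 -> close_to d S -> `|f T - f S| <= C * d.

Definition locally_lipschitz_mx m p (Phi : tensor F n K -> 'M[F]_(m, p)) :=
  forall i j, locally_lipschitz (fun S => Phi S i j).

Lemma eq_locally_lipschitz f g :
  f =1 g -> locally_lipschitz f -> locally_lipschitz g.
Proof. by move=> fg [C C0 hf]; exists C => // d S *; rewrite -!fg; apply: hf. Qed.

Lemma locally_lipschitz_cst c : locally_lipschitz (fun=> c).
Proof. by exists 0 => // *; rewrite subrr normr0 mul0r. Qed.

Lemma locally_lipschitz_entry i j k : locally_lipschitz (fun S => S k i j).
Proof. by exists 1 => // *; rewrite mul1r. Qed.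

Lemma locally_lipschitzD f g : locally_lipschitz f -> locally_lipschitz g ->
  locally_lipschitz (fun S => f S + g S).
Proof.
move=> [Cf Cf0 hf] [Cg Cg0 hg]; exists (Cf + Cg) => [|d S d0 d1 hS].
  exact: addr_ge0.
rewrite opprD addrACA mulrDl; apply: le_trans (ler_normD _ _) _.
by apply: lerD; [exact: hf | exact: hg].
Qed.

Lemma locally_lipschitzN f : locally_lipschitz f ->
  locally_lipschitz (fun S => - f S).
Proof. by move=> [C C0 hf]; exists C => // *; rewrite -opprD normrN; apply: hf. Qed.

Lemma locally_lipschitzM f g : locally_lipschitz f -> locally_lipschitz g ->
  locally_lipschitz (fun S => f S * g S).
Proof.
move=> [Cf Cf0 hf] [Cg Cg0 hg].
exists (`|f T| * Cg + Cf * (`|g T| + Cg)) => [|d S d0 d1 hS].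
  by rewrite addr_ge0 // mulr_ge0 // addr_ge0.
have gS_le : `|g S| <= `|g T| + Cg.
  rewrite -[g S](subKr (g T)); apply: le_trans (ler_normB _ _) _.
  by rewrite lerD2l (le_trans (hg _ _ d0 d1 hS)) // ler_piMr.
have -> : f T * g T - f S * g S = f T * (g T - g S) + (f T - f S) * g S.
  by rewrite mulrBr mulrBl addrA subrK.
rewrite [leRHS]mulrDl; apply: le_trans (ler_normD _ _) _; rewrite !normrM; apply: lerD.
  by rewrite -mulrA ler_wpM2l // hg.
by rewrite mulrAC ler_pM // hf.
Qed.

Lemma locally_lipschitz_sum (I : Type) (r : seq I) (P : pred I)
    (f : I -> tensor F n K -> F) :
  (forall i, locally_lipschitz (f i)) ->
  locally_lipschitz (fun S => \sum_(i <- r | P i) f i S).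
Proof.
move=> hf; elim: r => [|i r IH].
  by apply: eq_locally_lipschitz (locally_lipschitz_cst 0) => S; rewrite big_nil.
apply: eq_locally_lipschitz (_ : locally_lipschitz
  (fun S => if P i then f i S + \sum_(j <- r | P j) f j S else _)) => [S|].
  by rewrite big_cons.
by case: (P i) => //; apply: locally_lipschitzD.
Qed.

Lemma locally_lipschitz_prod (I : Type) (r : seq I) (P : pred I)
    (f : I -> tensor F n K -> F) :
  (forall i, locally_lipschitz (f i)) ->
  locally_lipschitz (fun S => \prod_(i <- r | P i) f i S).
Proof.
move=> hf; elim: r => [|i r IH].
  by apply: eq_locally_lipschitz (locally_lipschitz_cst 1) => S; rewrite big_nil.
apply: eq_locally_lipschitz (_ : locally_lipschitz
  (fun S => if P i then f i S * \prod_(j <- r | P j) f j S else _)) => [S|].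
  by rewrite big_cons.
by case: (P i) => //; apply: locally_lipschitzM.
Qed.

Lemma locally_lipschitz_mxM m p q (Phi : tensor F n K -> 'M[F]_(m, p))
    (Psi : tensor F n K -> 'M[F]_(p, q)) :
  locally_lipschitz_mx Phi -> locally_lipschitz_mx Psi ->
  locally_lipschitz_mx (fun S => Phi S *m Psi S).
Proof.
move=> hPhi hPsi i j; apply: eq_locally_lipschitz => [S|]; first by rewrite mxE.
by apply: locally_lipschitz_sum => k; apply: locally_lipschitzM.
Qed.

Lemma locally_lipschitz_det m (Phi : tensor F n K -> 'M[F]_m) :
  locally_lipschitz_mx Phi -> locally_lipschitz (fun S => \det (Phi S)).
Proof.
move=> hPhi; apply: locally_lipschitz_sum => s.
apply: locally_lipschitzM; first exact: locally_lipschitz_cst.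
by apply: locally_lipschitz_prod => i; apply: hPhi.
Qed.

Lemma locally_lipschitz_adj m (Phi : tensor F n K -> 'M[F]_m) :
  locally_lipschitz_mx Phi -> locally_lipschitz_mx (fun S => \adj (Phi S)).
Proof.
move=> hPhi i j; apply: eq_locally_lipschitz => [S|]; first by rewrite mxE.
apply: locally_lipschitzM; first exact: locally_lipschitz_cst.
apply: locally_lipschitz_det => a b.
by apply: eq_locally_lipschitz (hPhi _ _) => S; rewrite !mxE.
Qed.

Lemma locally_lipschitz_slice k : locally_lipschitz_mx (fun S => S k).
Proof. by move=> i j; apply: locally_lipschitz_entry. Qed.

Lemma locally_lipschitz_slice_mix (g : 'I_K -> F) :
  locally_lipschitz_mx (fun S => \sum_k g k *: S k).
Proof.
move=> i j; apply: eq_locally_lipschitz => [S|].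
  by rewrite summxE; under eq_bigr do rewrite mxE.
apply: locally_lipschitz_sum => k.
apply: locally_lipschitzM; first exact: locally_lipschitz_cst.
exact: locally_lipschitz_entry.
Qed.

Lemma exists_small_step (C z : F) : 0 <= C -> 0 < z ->
  exists d, [/\ 0 < d, d <= 1 & C * d < z].
Proof.
move=> C0 z0; have Cz0 : 0 < C + z by rewrite ltr_wpDl.
exists (z / (C + z)); split.
- by rewrite divr_gt0.
- by rewrite ler_pdivrMr // mul1r lerDr.
- by rewrite mulrA ltr_pdivrMr // mulrDr mulrC ltrDl mulr_gt0.
Qed.

Lemma border_rank_le_vanish r f : locally_lipschitz f -> border_rank_le r T ->
  (forall S, rank_le r S -> f S = 0) -> f T = 0.
Proof.
move=> [C C0 hf] T_border f_rank; apply/eqP/negPn/negP => fT0.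
have [d [d0 d1 Cd_lt]] : exists d, [/\ 0 < d, d <= 1 & C * d < `|f T|].
  by apply: exists_small_step; rewrite ?normr_gt0.
have [S [S_rank TS]] := T_border d d0.
have := hf d S d0 d1 (fun i j k => ltW (TS i j k)).
by rewrite (f_rank S S_rank) subr0 => /le_lt_trans/(_ Cd_lt); rewrite ltxx.
Qed.

End LocallyLipschitz.

Lemma rank_le_factor (F : numFieldType) n K r (S : tensor F n K) :
  rank_le r S -> exists (U : 'M[F]_(n, r)) (B : 'M[F]_(r, n)) (c : 'I_K -> 'rV_r),
    forall k, S k = U *m diag_mx (c k) *m B.
Proof.
move=> [a [b [c eS]]].
exists (\matrix_(i, l) a l i), (\matrix_(l, j) b l j), (fun k => \row_l c l k).
move=> k; apply/matrixP => i j; rewrite eS mul_mx_diag !mxE.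
by apply: eq_bigr => l _; rewrite !mxE mulrAC.
Qed.

Lemma slice_mix_factor (R : comPzRingType) n r K (S : 'I_K -> 'M[R]_n)
    (U : 'M[R]_(n, r)) (B : 'M[R]_(r, n)) (c : 'I_K -> 'rV_r) (g : 'I_K -> R) :
  (forall k, S k = U *m diag_mx (c k) *m B) ->
  \sum_k g k *: S k = U *m diag_mx (\sum_k g k *: c k) *m B.
Proof.
move=> eS; rewrite raddf_sum mulmx_sumr mulmx_suml; apply: eq_bigr => k _.
by rewrite eS /= diag_mxZ -scalemxAr -scalemxAl.
Qed.

Lemma rank_le_slices_comm (F : numFieldType) n K (S : tensor F n K)
    (g : 'I_K -> F) k l :
  rank_le n S -> (\sum_k g k *: S k) \in unitmx ->
  S k *m invmx (\sum_k g k *: S k) *m S l = S l *m invmx (\sum_k g k *: S k) *m S k.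
Proof.
move=> /rank_le_factor [U [B [c eS]]]; rewrite (slice_mix_factor g eS) !eS.
set D := diag_mx _ => UDBu; have := UDBu; rewrite !unitmx_mul => /andP[/andP[Uu Du] _].
have BWU : B *m invmx (U *m D *m B) *m U = invmx D.
  apply: (can_inj (mulKmx Du)); rewrite (mulmxV Du).
  have -> : D *m (B *m invmx (U *m D *m B) *m U) =
            invmx U *m (U *m D *m B *m invmx (U *m D *m B)) *m U.
    by rewrite !mulmxA (mulVmx Uu) mul1mx.
  by rewrite (mulmxV UDBu) mulmx1 (mulVmx Uu).
have sandwich X Y : U *m X *m B *m invmx (U *m D *m B) *m (U *m Y *m B) =
                    U *m (X *m invmx D *m Y) *m B.
  by rewrite -BWU !mulmxA.
rewrite !sandwich; congr (_ *m _ *m _).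
have Dinv_comm e : comm_mx (invmx D) (diag_mx e).
  exact/comm_mx_invmx/diag_mx_comm.
rewrite -mulmxA Dinv_comm mulmxA diag_mx_comm.
by rewrite -!mulmxA Dinv_comm.
Qed.

Lemma border_rank_le_slices_comm (F : numFieldType) n K (T : tensor F n K)
    (g : 'I_K -> F) k l :
  border_rank_le n T -> (\sum_k g k *: T k) \in unitmx ->
  T k *m invmx (\sum_k g k *: T k) *m T l = T l *m invmx (\sum_k g k *: T k) *m T k.
Proof.
move=> T_border Tg_unit.
pose mix (S : tensor F n K) := \sum_k g k *: S k.
pose A S := S k *m \adj (mix S) *m S l - S l *m \adj (mix S) *m S k.
have A_rank S : rank_le n S -> \det (mix S) *: A S = 0.
  move=> S_rank; have [S_unit|] := boolP (mix S \in unitmx); last first.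
    by rewrite unitmxE unitfE negbK => /eqP->; rewrite scale0r.
  rewrite /A (adj_unitmx S_unit) -!scalemxAr -!scalemxAl.
  by rewrite (rank_le_slices_comm _ _ S_rank S_unit) subrr scaler0.
have /eqP : \det (mix T) *: A T = 0.
  apply/matrixP => i j; rewrite [RHS]mxE.
  have lip_entry : locally_lipschitz T (fun S => (\det (mix S) *: A S) i j).
    apply: eq_locally_lipschitz (_ : locally_lipschitz T (fun S => \det (mix S) *
      ((S k *m \adj (mix S) *m S l) i j - (S l *m \adj (mix S) *m S k) i j))).
      by move=> S; rewrite !mxE.
    have lip_mix := locally_lipschitz_slice_mix T g.
    have lip_slice := locally_lipschitz_slice T.
    apply: locally_lipschitzM; first exact: locally_lipschitz_det.
    apply: locally_lipschitzD; last apply: locally_lipschitzN;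
      do 2 apply: locally_lipschitz_mxM => //; exact: locally_lipschitz_adj.
  by apply: border_rank_le_vanish lip_entry T_border _ => S /A_rank ->; rewrite mxE.
have mixT_neq0 : \det (mix T) != 0 by rewrite -unitfE -unitmxE.
rewrite scaler_eq0 (negbTE mixT_neq0) /A (adj_unitmx Tg_unit) /=.
rewrite -!scalemxAr -!scalemxAl -scalerBr scaler_eq0 (negbTE mixT_neq0).
by rewrite subr_eq0 => /eqP.
Qed.

Section CommonEigenvector.
Variable F : closedFieldType.

Lemma exists_eigenvector_in n (A : 'M[F]_n.+1) (P : 'rV[F]_n.+1 -> Prop) :
  (forall x y, P x -> P y -> P (x + y)) -> (forall a x, P x -> P (a *: x)) ->
  (forall x, P x -> P (x *m A)) ->
  forall v, P v -> v != 0 -> exists a w, [/\ P w, w != 0 & w *m A = a *: w].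
Proof.
move=> PD PZ PA v Pv v_neq0.
have [rs char_rs] := closed_field_poly_normal (char_poly A).
have : v *m \prod_(z <- rs) (A - z%:M) = 0.
  have := Cayley_Hamilton A.
  rewrite char_rs (monicP (char_poly_monic A)) scale1r rmorph_prod /=.
  under eq_bigr do rewrite rmorphB /= horner_mx_X horner_mx_C.
  by move=> ->; rewrite mulmx0.
elim: rs v Pv v_neq0 {char_rs} => [|z rs IH] v Pv v_neq0.
  by rewrite big_nil mulmx1 => v0; rewrite v0 eqxx in v_neq0.
rewrite big_cons -mulmxE mulmxA.
have [vAz0|vAz_neq0] := eqVneq (v *m (A - z%:M)) 0.
  move=> _; exists z, v; split => //.
  by move/eqP: vAz0; rewrite mulmxBr mul_mx_scalar subr_eq0 => /eqP.
apply: IH => //; rewrite mulmxBr mul_mx_scalar -scaleNr.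
by apply: PD; [apply: PA | apply: PZ].
Qed.

Lemma exists_common_eigenvector_in n (As : seq 'M[F]_n.+1)
    (P : 'rV[F]_n.+1 -> Prop) :
  {in As &, forall A B, comm_mx A B} ->
  (forall x y, P x -> P y -> P (x + y)) -> (forall a x, P x -> P (a *: x)) ->
  (forall A x, A \in As -> P x -> P (x *m A)) ->
  forall v, P v -> v != 0 ->
  exists w, [/\ P w, w != 0 & forall A, A \in As -> exists a, w *m A = a *: w].
Proof.
elim: As P => [|A As IH] P As_comm PD PZ PA v Pv v_neq0; first by exists v.
have [a [w [Pw w_neq0 wA]]] :=
  exists_eigenvector_in PD PZ (fun x => PA A x (mem_head _ _)) Pv v_neq0.
pose PAa x := P x /\ x *m A = a *: x.
have [||||w' [[Pw' w'A] w'_neq0 w'As]] := IH PAa _ _ _ _ w (conj Pw wA) w_neq0.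
- by move=> X Y XAs YAs; apply: As_comm; rewrite inE ?XAs ?YAs orbT.
- move=> x y [Px xA] [Py yA]; split; first exact: PD.
  by rewrite mulmxDl xA yA scalerDr.
- move=> b x [Px xA]; split; first exact: PZ.
  by rewrite -scalemxAl xA !scalerA mulrC.
- move=> X x XAs [Px xA]; split; first by apply: PA; rewrite // inE XAs orbT.
  rewrite -mulmxA -(As_comm A X) ?mem_head ?inE ?XAs ?orbT //.
  by rewrite mulmxA xA -scalemxAl.
exists w'; split => // X; rewrite inE => /predU1P [->|XAs]; last exact: w'As.
by exists a.
Qed.

Lemma singular_pencil_common_eigenvector n p (N : 'I_p -> 'M[F]_n) (a : 'I_p -> F) :
  (forall i j, comm_mx (N i) (N j)) -> \det (\sum_j a j *: N j) = 0 ->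
  exists w : 'rV_n, exists c : 'I_p -> F,
    [/\ w != 0, forall j, w *m N j = c j *: w & \sum_j a j * c j = 0].
Proof.
case: n N => [|n] N N_comm; first by rewrite det_mx00 => /eqP; rewrite oner_eq0.
set A := \sum_j a j *: N j => /eqP /det0P [v v_neq0 vA].
have A_comm j : comm_mx A (N j).
  by apply/comm_mx_sym/comm_mx_sum => i _; apply/comm_mxZ/N_comm.
have [||||w [wA w_neq0 w_eigen]] := exists_common_eigenvector_in
  (P := fun x => x *m A = 0) (As := [seq N j | j <- enum 'I_p]) _ _ _ _ vA v_neq0.
- by move=> _ _ /mapP [i _ ->] /mapP [j _ ->].
- by move=> x y /= xA yA; rewrite mulmxDl xA yA addr0.
- by move=> b x /= xA; rewrite -scalemxAl xA scaler0.
- by move=> _ x /mapP [j _ ->] /= xA; rewrite -mulmxA -A_comm mulmxA xA mul0mx.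
have /fin_all_exists [c wN] j : exists c, w *m N j = c *: w.
  by apply: w_eigen; apply: map_f; rewrite mem_enum.
exists w, c; split => //; move: wA; rewrite /A mulmx_sumr.
under eq_bigr do rewrite -scalemxAr wN scalerA.
by rewrite -scaler_suml => /eqP; rewrite scaler_eq0 (negbTE w_neq0) orbF => /eqP.
Qed.

End CommonEigenvector.

Lemma common_kernelP (F : fieldType) n p (N : 'I_p -> 'M[F]_n) :
  reflect (exists2 x : 'rV_n, x != 0 & forall j, x *m N j = 0)
          (~~ row_free (\mxrow_j N j)).
Proof.
have mxrow_eq0 (x : 'rV_n) : (x *m \mxrow_j N j == 0) = [forall j, x *m N j == 0].
  rewrite mul_mxrow -mxrow0; apply/eqP/forallP => [/eq_mxrowP xN j|xN].
    by rewrite xN.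
  by apply/eq_mxrowP => j; apply/eqP.
apply: (iffP idP) => [|[x x_neq0 xN]]; last first.
  apply/negP => /mulmx_free_eq0 free; move: x_neq0; rewrite -free mxrow_eq0.
  by apply/negP/negPn/forallP => j; rewrite xN.
rewrite -kermx_eq0 => /rowV0Pn [x /sub_kermxP /eqP x_ker x_neq0].
by exists x => // j; move: x_ker; rewrite mxrow_eq0 => /forallP /(_ j) /eqP.
Qed.

(* Only the coefficient vectors (s ^ j)_j with s a natural number are required,
   so that the property transfers along field morphisms. *)
Definition singular_pencil_common_kernel (F : fieldType) : Prop :=
  forall n p (N : 'I_p -> 'M[F]_n), (forall i j, comm_mx (N i) (N j)) ->
    (forall s : nat, \det (\sum_(j < p) s%:R ^+ j *: N j) = 0) ->
    exists2 x : 'rV_n, x != 0 & forall j, x *m N j = 0.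

Definition coefs_poly (R : nzRingType) p (c : 'I_p -> R) : {poly R} :=
  \sum_(j < p) c j *: 'X^j.

Lemma coefs_poly_coef (R : nzRingType) p (c : 'I_p -> R) (j : 'I_p) :
  (coefs_poly c)`_j = c j.
Proof.
rewrite coef_sum (bigD1 j) //= coefZ coefXn eqxx mulr1 big1 ?addr0 // => i ij.
by rewrite coefZ coefXn -[_ == _]/(j == i) eq_sym (negbTE ij) mulr0.
Qed.

Lemma horner_coefs_poly (R : comNzRingType) p (c : 'I_p -> R) x :
  (coefs_poly c).[x] = \sum_(j < p) c j * x ^+ j.
Proof. by rewrite horner_sum; apply: eq_bigr => j _; rewrite hornerZ hornerXn. Qed.

Lemma finite_coefs_not_all_nat_roots (F : numDomainType) p (E : seq F) :
  ~ (forall s : nat, exists c : 'I_p -> F,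
       [/\ forall j, c j \in E, coefs_poly c != 0 & root (coefs_poly c) s%:R]).
Proof.
move=> nat_roots; pose cf (f : {ffun 'I_p -> 'I_(size E)}) j := E`_(f j).
pose Q := \prod_(f | coefs_poly (cf f) != 0) coefs_poly (cf f).
have Q_neq0 : Q != 0 by apply/prodf_neq0.
have Q_root (s : nat) : root Q s%:R.
  have [c [c_E c_neq0 c_root]] := nat_roots s.
  have idx_lt j : (index (c j) E < size E)%N by rewrite index_mem.
  pose f := [ffun j => Ordinal (idx_lt j)].
  have cf_f : coefs_poly (cf f) = coefs_poly c.
    by apply: eq_bigr => j _; rewrite /cf ffunE nth_index.
  by rewrite /root /Q (bigD1 f) ?cf_f //= hornerM (eqP c_root) mul0r.
pose rs := [seq i%:R : F | i <- iota 0 (size Q)].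
have rs_roots : all (root Q) rs by apply/allP => _ /mapP [i _ ->].
have rs_uniq : uniq rs.
  by rewrite map_inj_uniq ?iota_uniq // => i j /eqP; rewrite eqr_nat => /eqP.
by have := max_poly_roots Q_neq0 rs_roots rs_uniq; rewrite size_map size_iota ltnn.
Qed.

Lemma numClosed_singular_pencil_common_kernel (F : numClosedFieldType) :
  singular_pencil_common_kernel F.
Proof.
move=> n p N N_comm N_sing; apply/common_kernelP/negP => N_free.
have [E charsE] := closed_field_poly_normal (\prod_j char_poly (N j)).
have charsE_monic : \prod_j char_poly (N j) \is monic.
  by apply: monic_prod => j _; apply: char_poly_monic.
apply: (@finite_coefs_not_all_nat_roots F p E) => s.
have [w [c [w_neq0 wN c_sum]]] :=
  singular_pencil_common_eigenvector (a := fun j => s%:R ^+ j) N_comm (N_sing s).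
exists c; split.
- move=> j; rewrite -root_prod_XsubC -[\prod_(z <- E) _]scale1r -(monicP charsE_monic).
  rewrite -charsE /root horner_prod; apply/prodf_eq0; exists j => //.
  by rewrite -/(root _ _) -eigenvalue_root_char; apply/eigenvalueP; exists w.
- apply/eqP => c0; suff : ~~ row_free (\mxrow_j N j) by rewrite N_free.
  apply/common_kernelP; exists w => // j.
  by rewrite wN -coefs_poly_coef c0 coef0 scale0r.
- by rewrite /root horner_coefs_poly (eq_bigr _ (fun j _ => mulrC _ _)) c_sum.
Qed.

Lemma map_singular_pencil_common_kernel (F L : fieldType) (f : {rmorphism F -> L}) :
  singular_pencil_common_kernel L -> singular_pencil_common_kernel F.
Proof.
move=> L_kernel n p N N_comm N_sing.
have [||x x_neq0 xN] := L_kernel n p (fun j => map_mx f (N j)).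
- by move=> i j; rewrite /comm_mx -!map_mxM N_comm.
- move=> s; have -> : \sum_(j < p) s%:R ^+ j *: map_mx f (N j) =
                      map_mx f (\sum_(j < p) s%:R ^+ j *: N j).
    by rewrite raddf_sum; apply: eq_bigr => j _; rewrite /= map_mxZ rmorphXn rmorph_nat.
  by rewrite det_map_mx N_sing rmorph0.
apply/common_kernelP; rewrite -(row_free_map f) map_mxrow.
by apply/common_kernelP; exists x.
Qed.

Lemma realType_singular_pencil_common_kernel (R : realType) :
  singular_pencil_common_kernel R.
Proof.
exact: (map_singular_pencil_common_kernel (real_complex R)
          (@numClosed_singular_pencil_common_kernel R[i])).
Qed.

Lemma difference_pencil_singular (F : fieldType) n K (P : 'I_K -> 'M[F]_n)
    (lam : 'I_K -> F) k0 :
  (forall gam, \sum_k lam k * gam k = 0 -> \det (\sum_k gam k *: P k) = 0) ->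
  forall a, \det (\sum_j a j *: (lam k0 *: P j - lam j *: P k0)) = 0.
Proof.
move=> P_sing a; set sa := \sum_i a i * lam i.
pose gam j := lam k0 * a j - sa *+ (j == k0).
have pick_k0 (V : nmodType) (G : 'I_K -> V) : \sum_j G j *+ (j == k0) = G k0.
  rewrite (bigD1 k0) //= eqxx mulr1n big1 ?addr0 // => j /negbTE->.
  exact: mulr0n.
have -> : \sum_j a j *: (lam k0 *: P j - lam j *: P k0) = \sum_k gam k *: P k.
  under [RHS]eq_bigr do rewrite scalerBl -scalerMnl -scalerA.
  rewrite sumrB pick_k0.
  under eq_bigr do rewrite scalerBr !scalerA.
  rewrite sumrB -scaler_suml; congr (_ - _).
  by apply: eq_bigr => j _; rewrite scalerA mulrC.
apply: P_sing; under eq_bigr do rewrite mulrBr mulrnAr mulrCA.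
rewrite sumrB pick_k0 -mulr_sumr -mulrBr.
by rewrite (eq_bigr _ (fun i _ => mulrC (lam i) (a i))) subrr mulr0.
Qed.

Lemma commuting_slices_JGE_vector (F : numFieldType) n K (P : tensor F n K)
    (lam : 'rV[F]_K) :
  singular_pencil_common_kernel F -> slice_mix_invertible P ->
  (forall k l, comm_mx (P k) (P l)) -> lam != 0 ->
  (forall gam, \sum_k lam 0 k * gam k = 0 -> \det (\sum_k gam k *: P k) = 0) ->
  exists x, JGE_vector P lam x.
Proof.
move=> kernel [g P_unit] P_comm lam_neq0 P_sing.
have [k0 lam_k0] : exists k0, lam 0 k0 != 0.
  by move/matrix0Pn: lam_neq0 => [i [k]]; rewrite ord1; exists k.
pose M j := lam 0 k0 *: P j - lam 0 j *: P k0.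
have P_M_comm k j : comm_mx (P k) (M j) by apply: comm_mxB; apply: comm_mxZ.
have [i j|s|x' x'_neq0 x'M] := kernel n K (fun j => (M j)^T).
- rewrite /comm_mx -!trmx_mul; congr trmx.
  by apply/comm_mx_sym/comm_mxB; apply/comm_mxZ/comm_mx_sym.
- have -> : \sum_(j < K) s%:R ^+ j *: (M j)^T = (\sum_(j < K) s%:R ^+ j *: M j)^T.
    by rewrite linear_sum; apply: eq_bigr => j _; rewrite linearZ.
  by rewrite det_tr (difference_pencil_singular _ P_sing).
set x := x'^T.
have Mx j : M j *m x = 0.
  by apply: trmx_inj; rewrite trmx_mul trmxK x'M trmx0.
have Px j : lam 0 k0 *: (P j *m x) = lam 0 j *: (P k0 *m x).
  by apply/eqP; rewrite -subr_eq0 !scalemxAl -mulmxBl Mx.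
pose y := (lam 0 k0)^-1 *: (P k0 *m x).
have Pxy j : P j *m x = lam 0 j *: y.
  by rewrite /y scalerA mulrC -scalerA -Px scalerA mulVf // scale1r.
have x_neq0 : x != 0 by rewrite trmx_eq0.
exists x; split => //; exists y; split => //; apply: contraNneq x_neq0 => y0.
have mixPx0 : (\sum_k g k *: P k) *m x = 0.
  by rewrite mulmx_suml big1 // => k _; rewrite -scalemxAl Pxy y0 !scaler0.
by rewrite -(mulKmx P_unit x) mixPx0 mulmx0.
Qed.

Lemma meval_pT (F : numFieldType) n K (T : tensor F n K) (gam : 'I_K -> F) :
  (pT T).@[gam] = \det (\sum_k gam k *: T k).
Proof.
rewrite /pT -det_map_mx; congr (\det _); apply/matrixP => i j.
rewrite !mxE summxE raddf_sum; apply: eq_bigr => k _.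
by rewrite /= mevalM mevalC mevalXU !mxE mulrC.
Qed.

Lemma meval_linform (F : numFieldType) K (lam : 'rV[F]_K) (gam : 'I_K -> F) :
  (linform lam).@[gam] = \sum_k lam 0 k * gam k.
Proof.
by rewrite /linform raddf_sum; apply: eq_bigr => k _; rewrite /= mevalM mevalC mevalXU.
Qed.

Lemma am_gt0_pencil_singular (F : numFieldType) n K (T : tensor F n K) lam m :
  am_eq T lam m -> (0 < m)%N -> forall gam : 'I_K -> F,
  \sum_k lam 0 k * gam k = 0 -> \det (\sum_k gam k *: T k) = 0.
Proof.
move=> [[r pT_eq] _] m_gt0 gam lam_gam.
rewrite -meval_pT pT_eq mevalM rmorphXn /= meval_linform lam_gam.
by rewrite expr0n eqn0Ngt m_gt0 mul0r.
Qed.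

Lemma JGE_vector_mull (F : numFieldType) n K (T P : tensor F n K) (A : 'M[F]_n) lam x :
  A \in unitmx -> (forall k, T k = A *m P k) ->
  JGE_vector P lam x -> JGE_vector T lam x.
Proof.
move=> A_unit TAP [x_neq0 [y [y_neq0 Pxy]]]; split => //.
exists (A *m y); split => [|k]; last by rewrite TAP -mulmxA Pxy scalemxAr.
by apply: contraNneq y_neq0 => Ay0; rewrite -(mulKmx A_unit y) Ay0 mulmx0.
Qed.

Lemma JGE_vector_gm_ge1 (F : numFieldType) n K (T : tensor F n K) lam x :
  JGE_vector T lam x -> gm_ge T lam 1.
Proof.
move=> x_JGE; exists x; split => [|c]; last by rewrite col_id.
by rewrite /row_free rank_rV trmx_eq0; case: x_JGE => ->.
Qed.

Lemma lemma3p4_stmt_of_common_kernel (F : numFieldType) n K :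
  singular_pencil_common_kernel F -> lemma3p4_stmt F n K.
Proof.
move=> kernel T [g Tg_unit] _ [T_border _] lam lam_neq0 m m_gt0 T_am.
set Tg := \sum_k g k *: T k in Tg_unit.
pose P k := invmx Tg *m T k.
have TP k : T k = Tg *m P k by rewrite mulKVmx.
have P_unit : (\sum_k g k *: P k) \in unitmx.
  rewrite (eq_bigr _ (fun k _ => scalemxAr _ _ _)) -mulmx_sumr (mulVmx Tg_unit).
  exact: unitmx1.
have P_comm k l : comm_mx (P k) (P l).
  by rewrite /comm_mx /P -!mulmxA !(mulmxA (T _)) border_rank_le_slices_comm.
have P_sing gam : \sum_k lam 0 k * gam k = 0 -> \det (\sum_k gam k *: P k) = 0.
  move=> lam_gam; rewrite (eq_bigr _ (fun k _ => scalemxAr _ _ _)) -mulmx_sumr.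
  by rewrite det_mulmx (am_gt0_pencil_singular T_am) ?mulr0.
have [x x_JGE] :=
  commuting_slices_JGE_vector kernel (ex_intro _ g P_unit) P_comm lam_neq0 P_sing.
exact: JGE_vector_gm_ge1 (JGE_vector_mull Tg_unit TP x_JGE).
Qed.

Theorem lemma3p4 :
  (forall (R : realType) (n K : nat), lemma3p4_stmt R n K) /\
  (forall (R : realType) (n K : nat), lemma3p4_stmt (R[i])%C n K).
Proof.
split=> R n K; apply: lemma3p4_stmt_of_common_kernel.
  exact: realType_singular_pencil_common_kernel.
exact: numClosed_singular_pencil_common_kernel.
Qed.
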